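(* Let $\mathfrak g$ be the free nilpotent real Lie algebra of rank $r\ge2$ and step $s\ge2$, of dimension $n$, with a Hall basis $X_1,\dots,X_n$. For every $\beta\in\mathbb{N}^n$, $i\in\{1,\dots,n\}$ and $q\in\{1,\dots,r\}$, $$[[X_i,X_q],X_\beta]=\sum_{\ell\in\mathcal A_{\beta,q}}\frac{\beta!}{(\beta-I(\ell))!\,I(\ell)!}\,[X_i,X_{\beta-I(\ell)+e_\ell}],$$ where $\mathcal A_{\beta,q}=\{\ell\in\{1,\dots,n\}: q\prec\ell,\ I(\ell)\le\beta\}$.
   Context: Multi-indices $\mathbb{N}^n$: $|\alpha|=\sum\alpha_i$, $\alpha!=\prod\alpha_i!$, $\alpha\le\beta$ componentwise, $e_k$ the $k$-th unit vector. Hall basis: take a basis $X_1,\dots,X_r$ of the first layer $\mathfrak g_1$ (degree 1); inductively, the basis elements of degree $d$ are the brackets $[X_i,X_j]$ of previously constructed elements with $i>j$, $d(i)+d(j)=d$, and such that, if $X_i$ (of degree $\ge2$) was constructed as $[X_h,X_k]$, then $k\le j$; they are listed after all elements of lower degree. To each index $\ell$ attach a string: $(\ell)$ if $\ell\le r$; if $X_\ell$ was constructed as $[X_a,X_b]$, the string of $a$ followed by $b$. With string $(\ell_0,\dots,\ell_h)$ one has $X_\ell=[\cdots[[X_{\ell_0},X_{\ell_1}],X_{\ell_2}],\dots,X_{\ell_h}]$. Define $I(\ell)\in\mathbb{N}^n$ by $I(\ell)_j=\#\{1\le p\le h:\ell_p=j\}$, and write $j\prec\ell$ if the string of $j$ is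 an initial segment of the string of $\ell$ (for $q\le r$, $q\prec\ell$ iff $\ell_0=q$). For $Y\in\mathfrak g$ and $\alpha\in\mathbb{N}^n$, $[Y,X_\alpha]$ denotes the left-nested bracket $[\cdots[[Y,X_1],X_1],\dots,X_n]$ where $X_1$ appears $\alpha_1$ times, then $X_2$ appears $\alpha_2$ times, ..., then $X_n$ appears $\alpha_n$ times; $[Y,X_0]=Y$. *)

From HB Require Import structures.
From mathcomp Require Import all_boot all_order all_algebra.
From mathcomp Require Import reals.
Set Implicit Arguments. Unset Strict Implicit. Unset Printing Implicit Defensive.
Import Order.TTheory GRing.Theory Num.Theory.
Local Open Scope ring_scope.

Definition lie_bracket (R : pzRingType) (L : lmodType R) (br : L -> L -> L) : Prop :=
  [/\ forall (c : R) (x y z : L), br (c *: x + y) z = c *: br x z + br y z,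
      forall (c : R) (x y z : L), br x (c *: y + z) = c *: br x y + br x z,
      forall x : L, br x x = 0 &
      forall x y z : L, br x (br y z) + br y (br z x) + br z (br x y) = 0].

Definition nilpotent_step (R : pzRingType) (L : lmodType R) (br : L -> L -> L)
  (s : nat) : Prop :=
  forall (x : L) (zs : seq L), size zs = s -> foldl br x zs = 0.

Definition lie_hom (R : pzRingType) (L M : lmodType R) (brL : L -> L -> L)
  (brM : M -> M -> M) (phi : L -> M) : Prop :=
  (forall (c : R) (x y : L), phi (c *: x + y) = c *: phi x + phi y) /\
  (forall x y : L, phi (brL x y) = brM (phi x) (phi y)).

Definition free_nilpotent (R : pzRingType) (r s : nat) (L : lmodType R)
  (br : L -> L -> L) (Y : 'I_r -> L) : Prop :=
  [/\ lie_bracket br, nilpotent_step br s &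
      forall (M : lmodType R) (brM : M -> M -> M),
        lie_bracket brM -> nilpotent_step brM s ->
        forall f : 'I_r -> M,
          exists phi : L -> M,
            [/\ lie_hom br brM phi, (forall i, phi (Y i) = f i) &
                forall psi : L -> M, lie_hom br brM psi ->
                  (forall i, psi (Y i) = f i) -> forall x, psi x = phi x]].

(* ---------- Hall basis (indices are 0-based: paper's X_{l+1} is our l) ------ *)

(* Combinatorial data of a Hall basis of the free nilpotent Lie algebra of rank r
   and step s, listed as X_0, ..., X_{n-1}:
   - indices l < r are the degree-1 elements (basis of the first layer);
   - an index l >= r is the bracket [X_(a l), X_(b l)];
   - deg is the degree, nondecreasing along the list;
   - the elements of degree >= 2 are exactly (and each once) the brackets
     [X_i, X_j] with i > j, deg i + deg j <= s and, if X_i = [X_h, X_k], k <= j.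
   (a l, b l are irrelevant for l < r.) *)
Definition is_hall (r s n : nat) (deg : 'I_n -> nat) (a b : 'I_n -> 'I_n) : Prop :=
  [/\ (r <= n)%N,
      forall l : 'I_n, (l < r)%N -> deg l = 1%N &
      forall l : 'I_n, (r <= l)%N ->
        [/\ (b l < a l)%N, deg l = (deg (a l) + deg (b l))%N &
            ((r <= a l)%N -> (b (a l) <= b l)%N)]] /\
  [/\ forall l m : 'I_n, (l <= m)%N -> (deg l <= deg m)%N,
      forall l : 'I_n, (deg l <= s)%N,
      forall l m : 'I_n, (r <= l)%N -> (r <= m)%N -> a l = a m -> b l = b m -> l = m &
      forall i j : 'I_n, (j < i)%N -> (deg i + deg j <= s)%N ->
        ((r <= i)%N -> (b i <= j)%N) ->
        exists l : 'I_n, [/\ (r <= l)%N, a l = i & b l = j]].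

(* the string (l_0, ..., l_h) attached to the index l (fuel-driven recursion;
   fuel n suffices since a l < l) *)
Fixpoint hall_string_fuel (r n : nat) (a b : 'I_n -> 'I_n) (fuel : nat) (l : 'I_n)
  : seq 'I_n :=
  match fuel with
  | 0 => [:: l]
  | k.+1 => if (l < r)%N then [:: l]
            else rcons (hall_string_fuel r a b k (a l)) (b l)
  end.

Definition hall_string (r n : nat) (a b : 'I_n -> 'I_n) (l : 'I_n) : seq 'I_n :=
  hall_string_fuel r a b n l.

Definition hall_I (r n : nat) (a b : 'I_n -> 'I_n) (l : 'I_n) : 'I_n -> nat :=
  fun j => count_mem j (behead (hall_string r a b l)).

Definition hall_prec (r n : nat) (a b : 'I_n -> 'I_n) (j l : 'I_n) : bool :=
  prefix (hall_string r a b j) (hall_string r a b l).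

Definition mi_le (n : nat) (al be : 'I_n -> nat) : bool := [forall i, (al i <= be i)%N].
Definition mi_fact (n : nat) (al : 'I_n -> nat) : nat := (\prod_(i < n) (al i)`!)%N.
Definition mi_sub (n : nat) (al be : 'I_n -> nat) : 'I_n -> nat := fun i => (al i - be i)%N.
Definition mi_add (n : nat) (al be : 'I_n -> nat) : 'I_n -> nat := fun i => (al i + be i)%N.
Definition mi_unit (n : nat) (k : 'I_n) : 'I_n -> nat := fun i => (i == k : nat).

Definition brack_mi (n : nat) (L : Type) (br : L -> L -> L) (Y : L)
  (X : 'I_n -> L) (al : 'I_n -> nat) : L :=
  foldl br Y (flatten [seq nseq (al i) (X i) | i <- enum 'I_n]).

From HB Require Import structures.
From mathcomp Require Import all_boot all_order all_algebra.
From mathcomp Require Import reals.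
From mathcomp Require Import zify.
Import Order.TTheory GRing.Theory Num.Theory.

(* Induction on |be|.  Let m be the largest index with be_m > 0 and be' = be - e_m,
   so that [[X_i, X_q], X_be] = [[[X_i, X_q], X_be'], X_m].  Bracketing a term
   [X_i, X_(be' - I(l) + e_l)] of the expansion for be' with X_m gives the term of
   the same index for be when l <= m; when m < l, Jacobi moves X_m before X_l at the
   cost of [[X_i, X_(be' - I(l))], [X_l, X_m]].  By the Hall conditions [X_l, X_m]
   is either the basis element l' with string (string of l, m), so that
   I(l') = I(l) + e_m, or it vanishes by nilpotency; hence these extra terms are the
   terms for be indexed by the l' whose string ends in m, and the coefficients add up
   by Pascal's rule C(be, J) = C(be', J) + C(be', J - e_m). *)

Set Implicit Arguments. Unset Strict Implicit. Unset Printing Implicit Defensive.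
Local Open Scope ring_scope.

Section LieBracket.
Variables (R : pzRingType) (L : lmodType R) (br : L -> L -> L).
Hypothesis br_lie : lie_bracket br.

Lemma brDl x y z : br (x + y) z = br x z + br y z.
Proof. by case: br_lie => brl _ _ _; have := brl 1 x y z; rewrite !scale1r. Qed.

Lemma brDr x y z : br z (x + y) = br z x + br z y.
Proof. by case: br_lie => _ brr _ _; have := brr 1 z x y; rewrite !scale1r. Qed.

Lemma br0l z : br 0 z = 0.
Proof. by apply/(addrI (br 0 z)); rewrite -brDl !addr0. Qed.

Lemma br0r z : br z 0 = 0.
Proof. by apply/(addrI (br z 0)); rewrite -brDr !addr0. Qed.

Lemma brZl c x z : br (c *: x) z = c *: br x z.
Proof. by case: br_lie => brl _ _ _; have := brl c x 0 z; rewrite !addr0 br0l addr0. Qed.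

Lemma brZr c x z : br z (c *: x) = c *: br z x.
Proof. by case: br_lie => _ brr _ _; have := brr c z x 0; rewrite !addr0 br0r addr0. Qed.

Lemma brBl x y z : br (x - y) z = br x z - br y z.
Proof. by rewrite brDl -scaleN1r brZl scaleN1r. Qed.

Lemma brNr x z : br z (- x) = - br z x.
Proof. by rewrite -scaleN1r brZr scaleN1r. Qed.

Lemma br_anticomm x y : br x y = - br y x.
Proof.
case: br_lie => _ _ brxx _; have := brxx (x + y).
by rewrite brDl !brDr !brxx add0r addr0 => /eqP; rewrite addr_eq0 => /eqP.
Qed.

Lemma br_jacobi x y z : br x (br y z) = br (br x y) z - br (br x z) y.
Proof.
case: br_lie => _ _ _ jacobi; apply/eqP; rewrite -subr_eq0 -(jacobi x y z).
by rewrite (br_anticomm z x) brNr (br_anticomm y (br x z)) (br_anticomm z (br x y))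
  opprK opprB addrA.
Qed.

Lemma foldl_br0 zs : foldl br 0 zs = 0.
Proof. by elim: zs => //= z zs IH; rewrite br0l. Qed.

Lemma foldl_brB x y zs : foldl br (x - y) zs = foldl br x zs - foldl br y zs.
Proof. by elim: zs x y => //= z zs IH x y; rewrite brBl IH. Qed.

Definition annihilated (k : nat) (x : L) :=
  forall zs, (k <= size zs)%N -> foldl br x zs = 0.

(* A substitute for homogeneity of degree [d] that needs no grading of [L]. *)
Definition has_weight (d : nat) (y : L) :=
  forall k x, annihilated (k + d) x -> annihilated k (br x y).

Lemma annihilated_mono k k' x : (k <= k')%N -> annihilated k x -> annihilated k' x.
Proof. by move=> lekk' ann zs hzs; apply: ann; apply: leq_trans hzs. Qed.

Lemma annihilated0 x : annihilated 0 x -> x = 0.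
Proof. by move=> ann; exact: (ann [::]). Qed.

Lemma annihilatedB k x y : annihilated k x -> annihilated k y -> annihilated k (x - y).
Proof. by move=> annx anny zs hzs; rewrite foldl_brB annx // anny // subr0. Qed.

Lemma nilpotent_annihilated s x : nilpotent_step br s -> annihilated s x.
Proof.
move=> nil zs hzs.
by rewrite -(cat_take_drop s zs) foldl_cat (nil _ (take s zs)) ?foldl_br0 // size_takel.
Qed.

Lemma has_weight1 y : has_weight 1 y.
Proof. by move=> k x ann zs hzs; apply: (ann (y :: zs)); rewrite /= addn1. Qed.

Lemma has_weight_br d1 d2 y1 y2 :
  has_weight d1 y1 -> has_weight d2 y2 -> has_weight (d1 + d2) (br y1 y2).
Proof.
move=> w1 w2 k x ann; rewrite br_jacobi; apply: annihilatedB.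
  by apply: w2; apply: w1; rewrite -addnA (addnC d2).
by apply: w1; apply: w2; rewrite -addnA.
Qed.

End LieBracket.

Section HallString.
Variables (r s n : nat) (deg : 'I_n -> nat) (a b : 'I_n -> 'I_n).
Hypothesis hall : is_hall r s deg a b.
Hypothesis r_gt0 : (0 < r)%N.

Local Notation string := (hall_string r a b).
Local Notation I := (hall_I r a b).

Lemma hall_deg_gt0 (l : 'I_n) : (0 < deg l)%N.
Proof.
case: hall => [[_ deg_gen _] [deg_mono _ _ _]].
have n_gt0 : (0 < n)%N by apply: leq_ltn_trans (ltn_ord l).
by have := deg_mono (Ordinal n_gt0) l (leq0n _); rewrite deg_gen.
Qed.

Lemma hall_b_lt_a (l : 'I_n) : (r <= l)%N -> (b l < a l)%N.
Proof. by case: hall => [[_ _ hbr] _] /hbr []. Qed.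

Lemma hall_a_lt (l : 'I_n) : (r <= l)%N -> (a l < l)%N.
Proof.
move=> rl; case: hall => [[_ _ hbr] [deg_mono _ _ _]]; case: (hbr l rl) => _ degl _.
rewrite ltnNge; apply/negP => /deg_mono; rewrite degl -{2}(addn0 (deg (a l))).
by rewrite leq_add2l leqNgt hall_deg_gt0.
Qed.

Lemma hall_b_lt (l : 'I_n) : (r <= l)%N -> (b l < l)%N.
Proof. by move=> rl; exact: ltn_trans (hall_b_lt_a rl) (hall_a_lt rl). Qed.

Lemma hall_string_fuel_enough f1 f2 (l : 'I_n) : (l < f1)%N -> (l < f2)%N ->
  hall_string_fuel r a b f1 l = hall_string_fuel r a b f2 l.
Proof.
elim: f1 f2 l => [//|f1 IH] [//|f2] l lf1 lf2 /=.
case: ifP => // /negbT; rewrite -leqNgt => rl; congr rcons.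
by apply: IH; apply: leq_trans (hall_a_lt rl) _.
Qed.

Lemma hall_string_fuelE f (l : 'I_n) : (l < f)%N -> hall_string_fuel r a b f l =
  if (l < r)%N then [:: l] else rcons (hall_string_fuel r a b f (a l)) (b l).
Proof.
case: f => [//|f] lf.
have -> : hall_string_fuel r a b f.+1 l =
  if (l < r)%N then [:: l] else rcons (hall_string_fuel r a b f (a l)) (b l) by [].
case: ifP => // /negbT; rewrite -leqNgt => rl; congr rcons.
have alf : (a l < f)%N by apply: leq_trans (hall_a_lt rl) _.
apply: hall_string_fuel_enough => //; exact: ltnW.
Qed.

Lemma hall_stringE (l : 'I_n) :
  string l = if (l < r)%N then [:: l] else rcons (string (a l)) (b l).
Proof. exact: hall_string_fuelE. Qed.

Definition hall_head (l : 'I_n) : 'I_n := head l (string l).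

Lemma hall_string_cons (l : 'I_n) : exists x t, string l = x :: t.
Proof.
rewrite hall_stringE; case: ifP => _; first by exists l, [::].
by case: (string (a l)) => [|x t]; [exists (b l), [::] | exists x, (rcons t (b l))].
Qed.

Lemma hall_head_gen (l : 'I_n) : (l < r)%N -> hall_head l = l.
Proof. by move=> lr; rewrite /hall_head hall_stringE lr. Qed.

Lemma hall_head_br (l : 'I_n) : (r <= l)%N -> hall_head l = hall_head (a l).
Proof.
move=> rl; rewrite /hall_head (hall_stringE l) ltnNge rl /=.
by case: (hall_string_cons (a l)) => x [t ->].
Qed.

Lemma hall_precE (q l : 'I_n) : (q < r)%N -> hall_prec r a b q l = (hall_head l == q).
Proof.
move=> qr; rewrite /hall_prec /hall_head (hall_stringE q) qr.
case: (hall_string_cons l) => x [t ->] /=.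
by case: t => [|? ?]; rewrite andbT eq_sym.
Qed.

Lemma hall_I_gen (l j : 'I_n) : (l < r)%N -> I l j = 0%N.
Proof. by move=> lr; rewrite /hall_I hall_stringE lr. Qed.

Lemma hall_I_br (l j : 'I_n) : (r <= l)%N -> I l j = (I (a l) j + (b l == j))%N.
Proof.
move=> rl; rewrite /hall_I (hall_stringE l) ltnNge rl /=.
case: (hall_string_cons (a l)) => x [t ->] /=.
by rewrite -cats1 count_cat /= addn0.
Qed.

Lemma hall_I_b_gt0 (l : 'I_n) : (r <= l)%N -> (0 < I l (b l))%N.
Proof. by move=> rl; rewrite hall_I_br // eqxx addn1. Qed.

Lemma hall_I_eq0_gen (l : 'I_n) : I l =1 (fun _ => 0%N) -> (l < r)%N.
Proof. by move=> I0; rewrite ltnNge; apply: contraTN isT => /hall_I_b_gt0; rewrite I0. Qed.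

Lemma hall_I_le_b (l j : 'I_n) : (r <= l)%N -> (0 < I l j)%N -> (j <= b l)%N.
Proof.
have [k] := ubnP l; elim: k l => [//|k IH] l lk rl.
rewrite hall_I_br //; case: (ltnP (a l) r) => ar.
  by rewrite hall_I_gen // add0n lt0b => /eqP ->.
case: eqP => [-> //|_]; rewrite addn0 => Ij.
have ble : (b (a l) <= b l)%N by case: hall => [[_ _ hbr] _]; case: (hbr l rl) => _ _; apply.
exact: leq_trans (IH _ (leq_trans (hall_a_lt rl) lk) ar Ij) ble.
Qed.

End HallString.

Section NestedBracket.
Variables (L : Type) (br : L -> L -> L) (n : nat) (X : 'I_n -> L).

Lemma brack_mi_ext x (al be : 'I_n -> nat) : al =1 be ->
  brack_mi br x X al = brack_mi br x X be.
Proof. by move=> eq_al; rewrite /brack_mi (eq_map (fun i => congr1 (nseq^~ _) (eq_al i))). Qed.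

Lemma flatten_map_nil (T : Type) (U : eqType) (F : U -> seq T) (t : seq U) :
  {in t, forall u, F u = [::]} -> flatten [seq F u | u <- t] = [::].
Proof.
elim: t => //= u t IH Fnil; rewrite Fnil ?mem_head // IH // => v vt.
by apply: Fnil; rewrite inE vt orbT.
Qed.

Lemma brack_mi0 x : brack_mi br x X (fun _ => 0%N) = x.
Proof. by rewrite /brack_mi flatten_map_nil. Qed.

Lemma flatten_nseq_rcons (t : seq 'I_n) (al : 'I_n -> nat) (m : 'I_n) :
  sorted ltn (map val t) -> m \in t -> (forall k : 'I_n, (m < k)%N -> al k = 0%N) ->
  flatten [seq nseq (al k + (k == m)) (X k) | k <- t] =
  rcons (flatten [seq nseq (al k) (X k) | k <- t]) (X m).
Proof.
elim: t => [//|k t IH] /= sorted_t mt al_above.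
have k_lt : {in t, forall k' : 'I_n, (k < k')%N}.
  move=> k' k't; have /allP := order_path_min ltn_trans sorted_t.
  by move=> /(_ k' (map_f val k't)).
case: (eqVneq k m) => km; last first.
  rewrite addn0 rcons_cat IH ?(path_sorted sorted_t) //.
  by move: mt; rewrite inE eq_sym (negbTE km).
subst m; rewrite addn1 !flatten_map_nil ?cats0; first by elim: (al k) => //= j ->.
all: move=> k' k't; have kk' := k_lt k' k't; rewrite al_above //.
by rewrite (_ : (k' == k) = false) //; apply: contraTF kk' => /eqP ->; rewrite ltnn.
Qed.

Lemma brack_mi_push x (al : 'I_n -> nat) (m : 'I_n) :
  (forall k : 'I_n, (m < k)%N -> al k = 0%N) ->
  brack_mi br x X (mi_add al (mi_unit m)) = br (brack_mi br x X al) (X m).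
Proof.
move=> al_above; rewrite /brack_mi /mi_add /mi_unit flatten_nseq_rcons ?mem_enum //.
  by rewrite -cats1 foldl_cat.
by rewrite val_enum_ord iota_ltn_sorted.
Qed.

End NestedBracket.

Section MultiIndex.
Variable n : nat.
Implicit Types (al be J : 'I_n -> nat) (m : 'I_n).

Definition mi_binom be J : nat := \prod_(k < n) 'C(be k, J k).

Lemma mi_leP J be : reflect (forall k, J k <= be k)%N (mi_le J be).
Proof. exact: forallP. Qed.

Lemma mi_fact_binom be J : mi_le J be ->
  mi_fact be = (mi_binom be J * (mi_fact (mi_sub be J) * mi_fact J))%N.
Proof.
move/mi_leP => leJ; rewrite /mi_fact /mi_binom /mi_sub -!big_split /=.
by apply: eq_bigr => k _; rewrite (mulnC ((be k - J k)`!)) bin_fact.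
Qed.

Lemma mi_binom_eq0 be J : ~~ mi_le J be -> mi_binom be J = 0%N.
Proof.
by case/forallPn => k; rewrite -ltnNge => ltk; rewrite /mi_binom (bigD1 k) //= bin_small.
Qed.

Lemma mi_binom_pascal be J m : (0 < be m)%N ->
  mi_binom be J = (mi_binom (mi_sub be (mi_unit m)) J +
    if (0 < J m)%N then mi_binom (mi_sub be (mi_unit m)) (mi_sub J (mi_unit m)) else 0)%N.
Proof.
move=> be_m_gt0; rewrite /mi_binom /mi_sub /mi_unit.
set P := \prod_(k < n | k != m) 'C(be k, J k).
have off_m1 : \prod_(k < n | k != m) 'C(be k - (k == m), J k) = P.
  by apply: eq_bigr => k /negbTE ->; rewrite subn0.
have off_m2 : \prod_(k < n | k != m) 'C(be k - (k == m), J k - (k == m)) = P.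
  by apply: eq_bigr => k /negbTE ->; rewrite !subn0.
rewrite (bigD1 m) //= [X in (X + _)%N](bigD1 m) //= off_m1.
rewrite [X in if _ then X else _](bigD1 m) //= off_m2 !eqxx !subn1 /=.
case: (J m) => [|j] /=; first by rewrite !bin0 addn0.
by rewrite -{1}(prednK be_m_gt0) binS mulnDl.
Qed.

Lemma mi_sum_eq0 be : (\sum_(k < n) be k = 0)%N -> be =1 (fun _ => 0%N).
Proof. by move/eqP; rewrite sum_nat_eq0 => /forallP be0 k; apply/eqP/be0. Qed.

Lemma mi_last_support be : (0 < \sum_(k < n) be k)%N ->
  exists2 m, (0 < be m)%N & forall k : 'I_n, (m < k)%N -> be k = 0%N.
Proof.
rewrite lt0n sum_nat_eq0 => /forallPn[k0 /=]; rewrite -lt0n => be_k0.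
case: (@arg_maxnP _ k0 (fun k => 0 < be k)%N val be_k0) => m be_m m_max; exists m => // k mk.
by apply/eqP; rewrite -leqn0 leqNgt; apply: contraTN mk => /m_max; rewrite -leqNgt.
Qed.

Lemma mi_sum_sub_unit be m : (0 < be m)%N ->
  (\sum_(k < n) mi_sub be (mi_unit m) k = (\sum_(k < n) be k).-1)%N.
Proof.
move=> be_m_gt0; rewrite (bigD1 m) //= [in RHS](bigD1 m) //= /mi_sub /mi_unit eqxx subn1.
rewrite (eq_bigr be) => [|k /negbTE ->]; last by rewrite subn0.
by rewrite -(prednK be_m_gt0).
Qed.

End MultiIndex.

Section HallExpansion.
Variables (R : pzRingType) (L : lmodType R) (br : L -> L -> L).
Variables (r s n : nat) (deg : 'I_n -> nat) (a b : 'I_n -> 'I_n) (X : 'I_n -> L).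
Hypothesis br_lie : lie_bracket br.
Hypothesis br_nil : nilpotent_step br s.
Hypothesis hall : is_hall r s deg a b.
Hypothesis r_gt0 : (0 < r)%N.
Hypothesis X_br : forall l : 'I_n, (r <= l)%N -> X l = br (X (a l)) (X (b l)).

Lemma hall_has_weight (l : 'I_n) : has_weight br (deg l) (X l).
Proof.
have [k] := ubnP l; elim: k l => [//|k IH] l lk.
case: hall => [[_ deg_gen hbr] _]; case: (ltnP l r) => lr.
  by rewrite deg_gen //; apply: has_weight1.
have [_ -> _] := hbr l lr; rewrite X_br //; apply: has_weight_br => //; apply: IH.
  exact: leq_trans (hall_a_lt hall r_gt0 lr) lk.
exact: leq_trans (hall_b_lt hall r_gt0 lr) lk.
Qed.

Lemma hall_annihilated (l : 'I_n) : annihilated br (s.+1 - deg l) (X l).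
Proof.
have [k] := ubnP l; elim: k l => [//|k IH] l lk.
case: hall => [[_ deg_gen hbr] [_ deg_le _ _]]; case: (ltnP l r) => lr.
  by rewrite deg_gen // subn1; apply: nilpotent_annihilated.
have [_ degl _] := hbr l lr; rewrite X_br //; apply: hall_has_weight.
have -> : (s.+1 - deg l + deg (b l) = s.+1 - deg (a l))%N by have := deg_le l; lia.
exact: IH (leq_trans (hall_a_lt hall r_gt0 lr) lk).
Qed.

Lemma hall_br_eq0 (l m : 'I_n) : (s < deg l + deg m)%N -> br (X l) (X m) = 0.
Proof.
move=> s_lt; apply: annihilated0; apply: hall_has_weight; rewrite add0n.
by apply: (annihilated_mono _ (@hall_annihilated l)); rewrite leq_subLR.
Qed.

Variables (i q : 'I_n).
Hypothesis q_gen : (q < r)%N.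

Local Notation I := (hall_I r a b).
Local Notation bm := (brack_mi br (X i) X).

Definition hall_A (be : 'I_n -> nat) (l : 'I_n) : bool :=
  (hall_head r a b l == q) && mi_le (I l) be.

Definition hall_term (be : 'I_n -> nat) (l : 'I_n) : L :=
  bm (mi_add (mi_sub be (I l)) (mi_unit l)).

Definition hall_expansion (be : 'I_n -> nat) : L :=
  \sum_(l < n | hall_A be l) (mi_binom be (I l))%:R *: hall_term be l.

Lemma hall_expansion0 (be : 'I_n -> nat) : be =1 (fun _ => 0%N) ->
  brack_mi br (br (X i) (X q)) X be = hall_expansion be.
Proof.
move=> be0; rewrite (brack_mi_ext _ _ _ be0) brack_mi0 /hall_expansion.
have Iq0 : I q =1 (fun _ => 0%N) by move=> k; rewrite (hall_I_gen hall r_gt0).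
have A_q (l : 'I_n) : hall_A be l = (l == q).
  apply/andP/eqP => [[/eqP <- /mi_leP I_le]|->]; last first.
    by rewrite (hall_head_gen hall r_gt0) //; split=> //; apply/mi_leP => k; rewrite Iq0.
  have I_l0 : I l =1 (fun _ => 0%N) by move=> k; apply/eqP; rewrite -leqn0 -(be0 k).
  by rewrite (hall_head_gen hall r_gt0) // (hall_I_eq0_gen hall r_gt0).
rewrite (big_pred1 q A_q) /mi_binom big1 ?scale1r => [|k _]; last by rewrite Iq0 bin0.
rewrite /hall_term brack_mi_push => [|k _]; last by rewrite /mi_sub be0.
by rewrite (@brack_mi_ext _ _ _ _ _ _ (fun _ => 0%N)) ?brack_mi0 // => k; rewrite /mi_sub be0.
Qed.

Section Step.
Variables (be : 'I_n -> nat) (m : 'I_n).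
Hypothesis be_m_gt0 : (0 < be m)%N.
Hypothesis be_above : forall k : 'I_n, (m < k)%N -> be k = 0%N.

Local Notation be' := (mi_sub be (mi_unit m)).

Lemma mi_sub_unitK (k : 'I_n) : be k = (be' k + (k == m))%N.
Proof. by rewrite /mi_sub /mi_unit; case: eqP => [->|_]; rewrite ?subn0 ?addn0 ?subnK. Qed.

Lemma be'_above (k : 'I_n) : (m < k)%N -> be' k = 0%N.
Proof. by move=> mk; rewrite /mi_sub be_above. Qed.

Lemma be'_sub_above (J : 'I_n -> nat) (k : 'I_n) : (m < k)%N -> mi_sub be' J k = 0%N.
Proof. by move=> mk; rewrite {1}/mi_sub be'_above. Qed.

Lemma hall_term_br (l : 'I_n) : mi_le (I l) be' ->
  br (hall_term be' l) (X m) =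
  hall_term be l + if (m < l)%N then br (bm (mi_sub be' (I l))) (br (X l) (X m)) else 0.
Proof.
move=> /mi_leP I_le; rewrite /hall_term; set rest := mi_sub be' (I l).
have rest_above (k : 'I_n) : (m < k)%N -> rest k = 0%N by apply: be'_sub_above.
have unit_above (k j : 'I_n) : (j < k)%N -> mi_unit j k = 0%N.
  by rewrite /mi_unit; case: eqP => // ->; rewrite ltnn.
have be_split (k : 'I_n) : mi_add (mi_sub be (I l)) (mi_unit l) k =
    mi_add (mi_add rest (mi_unit m)) (mi_unit l) k.
  by have := mi_sub_unitK k; have := I_le k; rewrite /rest /mi_add /mi_sub /mi_unit; lia.
rewrite (brack_mi_ext _ _ _ be_split); case: ltnP => [ml|lm]; last first.
  have swap (k : 'I_n) : mi_add (mi_add rest (mi_unit m)) (mi_unit l) k =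
      mi_add (mi_add rest (mi_unit l)) (mi_unit m) k.
    by rewrite /mi_add -!addnA (addnC (mi_unit m k)).
  rewrite addr0 (brack_mi_ext _ _ _ swap) [RHS]brack_mi_push // => k mk.
  by rewrite /mi_add rest_above // unit_above // (leq_ltn_trans lm mk).
rewrite [in LHS]brack_mi_push => [|k lk]; last by rewrite rest_above ?(ltn_trans ml lk).
rewrite [X in _ = X + _]brack_mi_push => [|k lk]; last first.
  by rewrite /mi_add rest_above ?unit_above ?(ltn_trans ml lk).
by rewrite brack_mi_push // (br_jacobi br_lie) addrC subrK.
Qed.

Lemma hall_b_le_last (J : 'I_n -> nat) (l : 'I_n) :
  (forall k : 'I_n, (m < k)%N -> J k = 0%N) -> mi_le (I l) J -> (r <= l)%N -> (b l <= m)%N.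
Proof.
move=> J_above /mi_leP I_le rl; rewrite leqNgt; apply/negP => /J_above J_b.
by have := leq_trans (hall_I_b_gt0 hall r_gt0 rl) (I_le (b l)); rewrite J_b.
Qed.

Lemma hall_pair_br (l : 'I_n) : mi_le (I l) be' -> (m < l)%N ->
  br (bm (mi_sub be' (I l))) (br (X l) (X m)) =
  \sum_(l' < n | [&& r <= l', a l' == l & b l' == m]%N) hall_term be l'.
Proof.
move=> I_le ml; case: hall => [_ [_ _ hall_inj hall_ex]].
case: (pickP (fun l' : 'I_n => [&& r <= l', a l' == l & b l' == m]%N)) => [l0|none]; last first.
  rewrite big_pred0 // (@hall_br_eq0 l m) ?br0r //; rewrite ltnNge; apply/negP => deg_le.
  have [|l0 [rl0 al0 bl0]] := hall_ex l m ml deg_le; first exact: hall_b_le_last be'_above I_le.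
  by move: (none l0); rewrite /= rl0 al0 bl0 !eqxx.
case/and3P => rl0 /eqP al0 /eqP bl0.
rewrite (big_pred1 l0) => [|l']; last first.
  apply/and3P/eqP => [[rl' /eqP al' /eqP bl']|->]; last by rewrite rl0 al0 bl0.
  by apply: hall_inj; rewrite ?al' ?bl'.
have l_l0 : (l < l0)%N by rewrite -al0 (hall_a_lt hall r_gt0).
have ->: br (X l) (X m) = X l0 by rewrite (X_br rl0) al0 bl0.
rewrite /hall_term -brack_mi_push => [|k l0k]; last first.
  by rewrite be'_sub_above ?(ltn_trans ml (ltn_trans l_l0 l0k)).
apply: brack_mi_ext => k; have := mi_sub_unitK k; have := mi_leP _ _ I_le k.
by rewrite /mi_add /mi_sub /mi_unit (hall_I_br hall r_gt0 k rl0) al0 bl0 (eq_sym m k); lia.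
Qed.

Lemma hall_A_sub_unit (l : 'I_n) : hall_A be' l -> hall_A be l.
Proof.
rewrite /hall_A => /andP[-> /mi_leP I_le]; apply/mi_leP => k.
by apply: leq_trans (I_le k) _; apply: leq_subr.
Qed.

Lemma hall_expansion_kept :
  \sum_(l < n | hall_A be' l) (mi_binom be' (I l))%:R *: hall_term be l =
  \sum_(l < n | hall_A be l) (mi_binom be' (I l))%:R *: hall_term be l.
Proof.
rewrite big_mkcond [RHS]big_mkcond; apply: eq_bigr => l _.
case: (boolP (hall_A be' l)) => [/hall_A_sub_unit -> //|not_A'].
case: ifP => // /andP[head_l _]; rewrite mi_binom_eq0 ?scale0r //.
by apply: contra not_A'; rewrite /hall_A head_l.
Qed.

Lemma hall_I_last (l : 'I_n) : mi_le (I l) be -> (0 < I l m)%N -> (r <= l)%N /\ b l = m.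
Proof.
move=> I_le I_m_gt0.
have rl : (r <= l)%N.
  by rewrite leqNgt; apply: contraTN I_m_gt0 => /(hall_I_gen hall r_gt0 m) ->.
split=> //; apply/val_inj/eqP; rewrite eqn_leq (hall_I_le_b hall r_gt0 rl I_m_gt0) andbT.
exact: hall_b_le_last be_above I_le rl.
Qed.

Lemma hall_I_br_last (l k : 'I_n) : (r <= l)%N -> b l = m ->
  I l k = (I (a l) k + mi_unit m k)%N.
Proof. by move=> rl bl; rewrite (hall_I_br hall r_gt0 k rl) bl /mi_unit eq_sym. Qed.

Lemma hall_A_br_last (l : 'I_n) : (r <= l)%N -> b l = m -> hall_A be l = hall_A be' (a l).
Proof.
move=> rl bl; rewrite /hall_A (hall_head_br hall r_gt0 rl); congr andb.
apply/mi_leP/mi_leP => I_le k; have := I_le k; have := mi_sub_unitK k;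
  rewrite (hall_I_br_last k rl bl) /mi_sub /mi_unit; lia.
Qed.

Lemma hall_pairs_reindex :
  \sum_(l < n | hall_A be' l && (m < l)%N)
     (mi_binom be' (I l))%:R *: br (bm (mi_sub be' (I l))) (br (X l) (X m)) =
  \sum_(l' < n | [&& r <= l', b l' == m & hall_A be' (a l')]%N)
     (mi_binom be' (I (a l')))%:R *: hall_term be l'.
Proof.
under eq_bigr => l /andP[/andP[_ I_le] ml] do rewrite (hall_pair_br I_le ml) scaler_sumr.
rewrite (exchange_big_dep (fun l' : 'I_n => [&& r <= l', b l' == m & hall_A be' (a l')]%N)).
  apply: eq_bigr => l' /and3P[rl' /eqP bl' A'].
  rewrite (big_pred1 (a l')) // => l; rewrite /= rl' bl' eqxx andbT (eq_sym l).
  case: eqP => [<-|]; rewrite ?andbF // A' -bl' /=.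
  by rewrite andbT (hall_b_lt_a hall rl').
by move=> l l' /andP[A' _] /and3P[-> /eqP -> ->].
Qed.

Lemma hall_pascal_reindex :
  \sum_(l < n | hall_A be l)
     (if (0 < I l m)%N then mi_binom be' (mi_sub (I l) (mi_unit m)) else 0%N)%:R
       *: hall_term be l =
  \sum_(l' < n | [&& r <= l', b l' == m & hall_A be' (a l')]%N)
     (mi_binom be' (I (a l')))%:R *: hall_term be l'.
Proof.
rewrite big_mkcond [RHS]big_mkcond; apply: eq_bigr => l _.
case: (boolP ((r <= l)%N && (b l == m))) => [/andP[rl /eqP bl]|not_last] /=.
  have I_m_gt0 : (0 < I l m)%N by rewrite (hall_I_br_last m rl bl) /mi_unit eqxx addn1.
  rewrite -hall_A_br_last // I_m_gt0 rl bl eqxx /=; case: ifP => // _.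
  congr (_%:R *: _); apply: eq_bigr => k _.
  by rewrite /mi_sub (hall_I_br_last k rl bl) addnK.
rewrite (_ : [&& _, _ & _] = false); last by apply: contraNF not_last => /and3P[-> ->].
case: ifP => // /andP[_ I_le]; case: ifP => [I_m_gt0|]; last by rewrite scale0r.
by have [rl bl] := hall_I_last I_le I_m_gt0; rewrite rl bl eqxx in not_last.
Qed.

Lemma hall_expansion_step :
  brack_mi br (br (X i) (X q)) X be' = hall_expansion be' ->
  brack_mi br (br (X i) (X q)) X be = hall_expansion be.
Proof.
move=> expansion_be'.
have -> : brack_mi br (br (X i) (X q)) X be = br (brack_mi br (br (X i) (X q)) X be') (X m).
  rewrite -brack_mi_push; last exact: be'_above.
  by apply: brack_mi_ext => k; rewrite mi_sub_unitK.
rewrite expansion_be' /hall_expansion.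
rewrite (big_morph (br^~ (X m)) (fun x y => brDl br_lie x y (X m)) (br0l br_lie (X m))).
under eq_bigr => l /andP[_ I_le] do
  rewrite (brZl br_lie) (hall_term_br I_le) scalerDr (fun_if (GRing.scale _)) scaler0.
rewrite big_split /= -big_mkcondr hall_expansion_kept hall_pairs_reindex.
under [RHS]eq_bigr do rewrite (mi_binom_pascal _ be_m_gt0) natrD scalerDl.
by rewrite big_split /= hall_pascal_reindex.
Qed.

End Step.

Lemma hall_expansion_brack (be : 'I_n -> nat) :
  brack_mi br (br (X i) (X q)) X be = hall_expansion be.
Proof.
have [N] := ubnP (\sum_(k < n) be k); elim: N be => [//|N IH] be.
case: (posnP (\sum_(k < n) be k)) => [/mi_sum_eq0 be0 _|sum_gt0 sum_lt].
  exact: hall_expansion0.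
have [m be_m_gt0 be_above] := mi_last_support sum_gt0.
apply: (hall_expansion_step be_m_gt0 be_above); apply: IH.
by rewrite mi_sum_sub_unit // -ltnS (prednK sum_gt0).
Qed.

End HallExpansion.

Theorem lemma3p2 (R : realType) (r s n : nat) (L : lmodType R)
  (br : L -> L -> L) (Y : 'I_r -> L)
  (deg : 'I_n -> nat) (a b : 'I_n -> 'I_n) (X : 'I_n -> L) :
  (2 <= r)%N -> (2 <= s)%N ->
  free_nilpotent s br Y ->
  is_hall r s deg a b ->
  (forall (l : 'I_n) (Hl : (l < r)%N), X l = Y (Ordinal Hl)) ->
  (forall l : 'I_n, (r <= l)%N -> X l = br (X (a l)) (X (b l))) ->
  forall (be : 'I_n -> nat) (i q : 'I_n), (q < r)%N ->
    brack_mi br (br (X i) (X q)) X be =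
    \sum_(l < n | hall_prec r a b q l && mi_le (hall_I r a b l) be)
      (((mi_fact be)%:R / ((mi_fact (mi_sub be (hall_I r a b l)))
                            * mi_fact (hall_I r a b l))%:R) : R)
      *: brack_mi br (X i) X
           (mi_add (mi_sub be (hall_I r a b l)) (mi_unit l)).
Proof.
move=> r_ge2 _ [br_lie br_nil _] hall _ X_br be i q q_gen.
have r_gt0 : (0 < r)%N by apply: leq_trans r_ge2.
rewrite (hall_expansion_brack br_lie br_nil hall r_gt0 X_br i q_gen) /hall_expansion.
apply: eq_big => [l|l /andP[_ I_le]]; first by rewrite /hall_A (hall_precE hall r_gt0 l q_gen).
rewrite (mi_fact_binom I_le) natrM mulfK // pnatr_eq0 -lt0n muln_gt0.
by rewrite !prodn_gt0 // => k; exact: fact_gt0.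
Qed.
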